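(* Let $p_0,p_1,p_2\in\mathbb{Z}^2$ be such that $P:=\operatorname{conv}\{p_0,p_1,p_2\}$ is a triangle whose only integer points are $p_0,p_1,p_2$. Let $Q:=\operatorname{conv}\{q_0,q_1,q_2\}$ be a triangle with $p_i=(1-x_i)q_{i+1}+x_iq_{i+2}$ for $i=0,1,2$ (indices modulo $3$), where $0<x_i<1$. Then: (I) $Q$ is a maximal lattice-free triangle of type 3 if and only if either (a) $x_i+x_j>1$ for all $0\le i<j\le2$, or (b) $x_i+x_j<1$ for all $0\le i<j\le 2$. (II) If (a) holds, then $w(Q)=\dfrac{\min\{x_0,x_1,x_2\}}{x_0x_1x_2+(1-x_0)(1-x_1)(1-x_2)}$. (III) If (a) holds, then $w(Q)\le1+\frac{2}{\sqrt3}$, with equality if and only if $x_0=x_1=x_2=\frac1{\sqrt3}$.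
   Context: A closed convex set in $\mathbb{R}^2$ with non-empty interior is lattice-free if its interior contains no point of $\mathbb{Z}^2$, and maximal lattice-free if it is lattice-free and not properly contained in another lattice-free closed convex set with non-empty interior. A maximal lattice-free triangle of type 3 is a maximal lattice-free triangle having exactly three integer points on its boundary, one in the relative interior of each edge. For $u\in\mathbb{R}^2$, $w(Q,u):=\max_{x\in Q}u^\top x-\min_{x\in Q}u^\top x$ and the lattice width is $w(Q):=\min\{w(Q,u):u\in\mathbb{Z}^2\setminus\{o\}\}$. *)

(* points of R^2 are pairs (R * R) for R : realType,
   with the (product = Euclidean) topology of mathcomp-analysis. *)
From HB Require Import structures.
From mathcomp Require Import all_boot all_order all_algebra.
From mathcomp Require Import all_classical all_reals all_analysis.
Set Implicit Arguments. Unset Strict Implicit. Unset Printing Implicit Defensive.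
Import Order.TTheory GRing.Theory Num.Theory numFieldNormedType.Exports.
Local Open Scope classical_set_scope.
Local Open Scope ring_scope.

Section Defs.
Variable R : realType.
Local Notation pt := (R * R)%type.

Definition lattice_point (z : pt) : Prop :=
  exists m n : int, z = (m%:~R, n%:~R).

Definition comb (t : R) (a b : pt) : pt :=
  ((1 - t) * a.1 + t * b.1, (1 - t) * a.2 + t * b.2).

Definition dot (u x : pt) : R := u.1 * x.1 + u.2 * x.2.

Definition conv3 (a b c : pt) : set pt :=
  [set x | exists l0 l1 l2 : R, [/\ 0 <= l0, 0 <= l1, 0 <= l2, l0 + l1 + l2 = 1 &
     x = (l0 * a.1 + l1 * b.1 + l2 * c.1, l0 * a.2 + l1 * b.2 + l2 * c.2)]].

Definition nondeg_triangle (a b c : pt) : Prop :=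
  (b.1 - a.1) * (c.2 - a.2) - (b.2 - a.2) * (c.1 - a.1) != 0.

Definition convex_set2 (K : set pt) : Prop :=
  forall x y t, K x -> K y -> 0 <= t <= 1 -> K (comb t x y).

Definition ccbody (K : set pt) : Prop :=
  [/\ closed K, convex_set2 K & exists x, (K°) x].

Definition lattice_free (K : set pt) : Prop :=
  ccbody K /\ (forall z, lattice_point z -> ~ (K°) z).

Definition maximal_lattice_free (K : set pt) : Prop :=
  lattice_free K /\ (forall K', lattice_free K' -> K `<=` K' -> K' = K).

Definition open_segment (a b : pt) : set pt :=
  [set x | exists2 t, 0 < t < 1 & x = comb t a b].

Definition mlf_triangle_type3 (q0 q1 q2 : pt) : Prop :=
  let Q := conv3 q0 q1 q2 in
  [/\ nondeg_triangle q0 q1 q2, maximal_lattice_free Q &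
   exists z0 z1 z2 : pt,
     [/\ lattice_point z0 /\ open_segment q1 q2 z0,
         lattice_point z1 /\ open_segment q2 q0 z1,
         lattice_point z2 /\ open_segment q0 q1 z2 &
         forall z, lattice_point z -> Q z -> ~ (Q°) z ->
           z = z0 \/ z = z1 \/ z = z2]].

Definition width_dir (K : set pt) (u : pt) : R :=
  sup [set dot u x | x in K] - inf [set dot u x | x in K].

(* lattice width w(Q) (the infimum is attained for convex bodies) *)
Definition lattice_width (K : set pt) : R :=
  inf [set width_dir K u | u in [set u | lattice_point u /\ u <> (0, 0)]].

End Defs.

(* Since [p0 p1 p2] is an empty lattice triangle it is unimodular, so the lattice
   points are exactly the integer affine combinations [m0 p0 + m1 p1 + m2 p2].
   Their barycentric coordinates in [Q] are affine in [(m0, m1, m2)], and under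
   (a) or (b) they are all nonnegative only for the three unit vectors: [Q] is
   lattice-free with [p0], [p1], [p2] in the relative interiors of its edges, which
   makes it maximal.  If neither (a) nor (b) holds, one of [- p0 + p1 + p2],
   [p0 - p1 + p2], [p0 + p1 - p2] is a fourth lattice point of [Q].
   For an integral direction [u] the width of [Q] depends only on the integers
   [u.(p1 - p0)] and [u.(p2 - p0)], and minimizing over them gives
   [min x_i / (x0 x1 x2 + (1 - x0) (1 - x1) (1 - x2))], attained at [(1, 0)],
   [(0, 1)] or [(1, 1)].  The final bound is a quadratic inequality in the
   smallest [x_i], with equality exactly at [x_i = 1 / sqrt 3]. *)

From HB Require Import structures.
From mathcomp Require Import all_boot all_order all_algebra.
From mathcomp Require Import all_classical all_reals all_analysis.
From mathcomp Require Import ring lra zify.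
Set Implicit Arguments. Unset Strict Implicit. Unset Printing Implicit Defensive.
Import Order.TTheory GRing.Theory Num.Theory numFieldNormedType.Exports.
Local Open Scope classical_set_scope.
Local Open Scope ring_scope.

Section Barycentric.
Variable R : realType.
Local Notation pt := (R * R)%type.

Definition cross (a b c : pt) : R :=
  (b.1 - a.1) * (c.2 - a.2) - (b.2 - a.2) * (c.1 - a.1).

Definition lcomb3 (l0 l1 l2 : R) (a b c : pt) : pt :=
  (l0 * a.1 + l1 * b.1 + l2 * c.1, l0 * a.2 + l1 * b.2 + l2 * c.2).

Definition bary (a b c z : pt) : R := cross z b c / cross a b c.

Definition affine (f : pt -> R) :=
  exists a b c : R, forall z, f z = a * z.1 + b * z.2 + c.

Lemma pair_projE (x : pt) u v : x.1 = u -> x.2 = v -> x = (u, v).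
Proof. by case: x => /= ? ? -> ->. Qed.

Lemma cross_rot (a b c : pt) : cross b c a = cross a b c.
Proof. by rewrite /cross; ring. Qed.

Lemma cross_rot_neq0 (a b c : pt) :
  cross a b c != 0 -> cross b c a != 0 /\ cross c a b != 0.
Proof. by move=> h; rewrite (cross_rot b c a) (cross_rot a b c). Qed.

Lemma conv3_rot (a b c : pt) : conv3 b c a = conv3 a b c.
Proof.
apply/seteqP; split=> z [l0 [l1 [l2 [h0 h1 h2 hs ->]]]].
- exists l2, l0, l1; split => //; first lra.
  by apply: pair_projE => /=; ring.
- exists l1, l2, l0; split => //; first lra.
  by apply: pair_projE => /=; ring.
Qed.

Lemma lcomb3_rot l0 l1 l2 (a b c : pt) :
  lcomb3 l0 l1 l2 a b c = lcomb3 l1 l2 l0 b c a.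
Proof. by apply: pair_projE => /=; ring. Qed.

Lemma lcomb3_vertex l0 l1 l2 (a b c : pt) : l0 = 1 -> l1 = 0 -> l2 = 0 ->
  lcomb3 l0 l1 l2 a b c = a.
Proof. by move=> -> -> ->; case: a => a1 a2; apply: pair_projE => /=; ring. Qed.

Lemma baryE (a b c : pt) l0 l1 l2 : cross a b c != 0 -> l0 + l1 + l2 = 1 ->
  bary a b c (lcomb3 l0 l1 l2 a b c) = l0.
Proof.
move=> h hs; rewrite /bary (_ : cross _ b c = l0 * cross a b c) ?mulfK //.
have -> : l0 = 1 - l1 - l2 by lra.
by rewrite /cross /=; ring.
Qed.

Lemma bary_vertices (a b c : pt) : cross a b c != 0 ->
  [/\ bary a b c a = 1, bary a b c b = 0 & bary a b c c = 0].
Proof. by move=> h; rewrite /bary divff //; split => //; rewrite /cross; ring. Qed.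

Lemma bary_edge (a b c : pt) t : cross a b c != 0 ->
  [/\ bary a b c (comb t b c) = 0, bary b c a (comb t b c) = 1 - t &
      bary c a b (comb t b c) = t].
Proof.
move=> h; have [hb hc] := cross_rot_neq0 h.
have -> : comb t b c = lcomb3 0 (1 - t) t a b c by apply: pair_projE => /=; ring.
have hs0 : 0 + (1 - t) + t = 1 by ring.
have hs1 : (1 - t) + t + 0 = 1 by ring.
have hs2 : t + 0 + (1 - t) = 1 by ring.
by rewrite baryE // lcomb3_rot baryE // lcomb3_rot baryE.
Qed.

Lemma bary_decomp (a b c z : pt) : cross a b c != 0 ->
  z = lcomb3 (bary a b c z) (bary b c a z) (bary c a b z) a b c.
Proof.
move=> h; rewrite /bary (cross_rot a b c) (cross_rot b c a) (cross_rot a b c).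
move: h; case: z => z1 z2; case: a => a1 a2; case: b => b1 b2; case: c => c1 c2.
by rewrite /cross /lcomb3 /= => h; congr pair; field.
Qed.

Lemma bary_sum (a b c z : pt) : cross a b c != 0 ->
  bary a b c z + bary b c a z + bary c a b z = 1.
Proof.
move=> h; rewrite /bary (cross_rot a b c) (cross_rot b c a) (cross_rot a b c).
rewrite -!mulrDl.
rewrite (_ : cross z b c + cross z c a + cross z a b = cross a b c) ?divff //.
by rewrite /cross; ring.
Qed.

Lemma conv3P (a b c z : pt) : cross a b c != 0 -> conv3 a b c z <->
  [/\ 0 <= bary a b c z, 0 <= bary b c a z & 0 <= bary c a b z].
Proof.
move=> h; have [hb hc] := cross_rot_neq0 h.
split.
- case=> l0 [l1 [l2 [h0 h1 h2 hs ->]]].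
  have hs1 : l1 + l2 + l0 = 1 by lra.
  have hs2 : l2 + l0 + l1 = 1 by lra.
  rewrite -/(lcomb3 l0 l1 l2 a b c) baryE //.
  by rewrite lcomb3_rot baryE // lcomb3_rot baryE.
- case=> h0 h1 h2; exists (bary a b c z), (bary b c a z), (bary c a b z).
  by split => //; [exact: bary_sum | exact: bary_decomp].
Qed.

Lemma affine_comb (f : pt -> R) t (x y : pt) :
  affine f -> f (comb t x y) = (1 - t) * f x + t * f y.
Proof. by case=> a [b [c hf]]; rewrite !hf /comb /=; ring. Qed.

Lemma affine_bary (a b c : pt) : affine (bary a b c).
Proof.
exists ((b.2 - c.2) / cross a b c), ((c.1 - b.1) / cross a b c),
  ((b.1 * c.2 - b.2 * c.1) / cross a b c) => z.
by rewrite /bary /cross; ring.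
Qed.

Lemma affine_lin (f g : pt -> R) al be ga : affine f -> affine g ->
  affine (fun z => al * f z + be * g z + ga).
Proof.
case=> a [b [c hf]] [a' [b' [c' hg]]].
exists (al * a + be * a'), (al * b + be * b'), (al * c + be * c' + ga) => z.
by rewrite hf hg; ring.
Qed.

Lemma affine_dot (u : pt) : affine (dot u).
Proof. by exists u.1, u.2, 0 => z; rewrite /dot addr0. Qed.

Lemma nbhs_pairP (z : pt) (A : set pt) : nbhs z A <-> exists2 e : R, 0 < e &
  forall y : pt, `|z.1 - y.1| < e -> `|z.2 - y.2| < e -> A y.
Proof.
rewrite nbhs_ballP; split.
- case=> e /= e0 H; exists e => // y h1 h2; apply: H.
  by rewrite /ball /= /prod_ball; split; rewrite -ball_normE.
- case=> e e0 H; exists e => // y [] /=; rewrite -!ball_normE /ball_ => h1 h2.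
  exact: H.
Qed.

Lemma nbhs_affine_gt0 (f : pt -> R) (z : pt) :
  affine f -> 0 < f z -> nbhs z [set y | 0 < f y].
Proof.
case=> a [b [c hf]] hz; apply/nbhs_pairP.
have hk : 0 < 1 + `|a| + `|b| by rewrite -addrA ltr_pwDl // addr_ge0.
exists (f z / (1 + `|a| + `|b|)); first by rewrite divr_gt0.
set e := f z / _ => y h1 h2 /=.
have k1 : a * (z.1 - y.1) <= `|a| * e.
  by rewrite (le_trans (ler_norm _)) // normrM ler_wpM2l // ltW.
have k2 : b * (z.2 - y.2) <= `|b| * e.
  by rewrite (le_trans (ler_norm _)) // normrM ler_wpM2l // ltW.
have k3 : (1 + `|a| + `|b|) * e = f z by rewrite /e mulrC mulfVK // gt_eqF.
have e0 : 0 < e by rewrite divr_gt0.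
by clearbody e; rewrite hf in k3 hz; rewrite hf; lra.
Qed.

(* Moving from [z] away from a point [w] where [f > 0] decreases [f] below [f z]. *)
Lemma nbhs_affine_ge0 (A : set pt) (f : pt -> R) (z w : pt) :
  affine f -> 0 < f w -> nbhs z A -> (forall y, A y -> 0 <= f y) -> 0 < f z.
Proof.
move=> af hw /nbhs_pairP [e e0 H] hA; rewrite ltNge; apply/negP => hz.
set k := 1 + `|w.1 - z.1| + `|w.2 - z.2|.
have hk : 0 < k by rewrite /k -addrA ltr_pwDl // addr_ge0.
set t := e / k.
have t0 : 0 < t by rewrite divr_gt0.
have tk : k * t = e by rewrite /t mulrC mulfVK // gt_eqF.
have n1 : 0 <= `|w.1 - z.1| by [].
have n2 : 0 <= `|w.2 - z.2| by [].
have : A (comb (- t) z w).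
  apply: H; rewrite /comb /=.
  - rewrite (_ : _ - _ = t * (w.1 - z.1)); last by ring.
    by rewrite normrM gtr0_norm //; rewrite /k in tk; nra.
  - rewrite (_ : _ - _ = t * (w.2 - z.2)); last by ring.
    by rewrite normrM gtr0_norm //; rewrite /k in tk; nra.
by move/hA; rewrite affine_comb //; nra.
Qed.

Lemma interior_conv3P (a b c z : pt) : cross a b c != 0 -> (conv3 a b c)° z <->
  [/\ 0 < bary a b c z, 0 < bary b c a z & 0 < bary c a b z].
Proof.
move=> h; have [hb hc] := cross_rot_neq0 h.
have [va _ _] := bary_vertices h; have [vb _ _] := bary_vertices hb.
have [vc _ _] := bary_vertices hc.
have ge0 f : f \in [:: bary a b c; bary b c a; bary c a b] ->
    forall y, conv3 a b c y -> 0 <= f y.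
  by rewrite !inE => /or3P [] /eqP -> y /(conv3P _ h) [].
split => [hi|[h0 h1 h2]].
- split; [apply: (nbhs_affine_ge0 (w := a)) hi (ge0 _ _) |
          apply: (nbhs_affine_ge0 (w := b)) hi (ge0 _ _) |
          apply: (nbhs_affine_ge0 (w := c)) hi (ge0 _ _)];
    rewrite ?inE ?eqxx ?orbT ?va ?vb ?vc //; exact: affine_bary.
- have N0 := nbhs_affine_gt0 (affine_bary a b c) h0.
  have N1 := nbhs_affine_gt0 (affine_bary b c a) h1.
  have N2 := nbhs_affine_gt0 (affine_bary c a b) h2.
  apply: filterS (filterI N0 (filterI N1 N2)) => y [/= y0 [/= y1 y2]].
  by apply/conv3P => //; split; apply: ltW.
Qed.

Lemma conv3_closed (a b c : pt) : cross a b c != 0 -> closed (conv3 a b c).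
Proof.
move=> h z hz; apply/(conv3P _ h).
have key f : affine f -> (forall y, conv3 a b c y -> 0 <= f y) -> 0 <= f z.
  move=> af hf; rewrite leNgt; apply/negP => hneg.
  have N : nbhs z [set y | 0 < (-1) * f y + 0 * f y + 0].
    by apply: nbhs_affine_gt0; [exact: affine_lin | lra].
  by case: (hz _ N) => y [/hf hy /= hy2]; lra.
by split; apply: key; try exact: affine_bary; move=> y /(conv3P _ h) [].
Qed.

Lemma conv3_convex (a b c : pt) : cross a b c != 0 -> convex_set2 (conv3 a b c).
Proof.
move=> h x y t /(conv3P _ h) [x0 x1 x2] /(conv3P _ h) [y0 y1 y2] /andP [t0 t1].
apply/(conv3P _ h); rewrite !affine_comb; try exact: affine_bary.
by split; apply: addr_ge0; apply: mulr_ge0 => //; lra.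
Qed.

Lemma conv3_ccbody (a b c : pt) : cross a b c != 0 -> ccbody (conv3 a b c).
Proof.
move=> h; have [hb hc] := cross_rot_neq0 h.
split; [exact: conv3_closed | exact: conv3_convex |].
have hs : 1 / 3 + 1 / 3 + 1 / 3 = 1 :> R by lra.
exists (lcomb3 (1 / 3) (1 / 3) (1 / 3) a b c); apply/interior_conv3P => //.
by rewrite baryE // lcomb3_rot baryE // lcomb3_rot baryE //; split; lra.
Qed.

(* [v] is where the line through [y] and [w] crosses the edge [b c]. *)
Lemma segment_from_conv3 (a b c y w : pt) : cross a b c != 0 ->
  bary a b c y < bary a b c w -> bary a b c w < 0 ->
  0 <= bary b c a y * bary a b c w - bary a b c y * bary b c a w ->
  0 <= bary c a b y * bary a b c w - bary a b c y * bary c a b w ->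
  exists2 v, conv3 a b c v & exists2 s, 0 <= s <= 1 & w = comb s v y.
Proof.
move=> h; have af0 := affine_bary a b c; have af1 := affine_bary b c a.
have af2 := affine_bary c a b.
set L0 := bary a b c in af0 *; set L1 := bary b c a in af1 *.
set L2 := bary c a b in af2 *.
set y0 := L0 y; set y1 := L1 y; set y2 := L2 y => hyw hw0 hw1 hw2.
set s := L0 w / y0.
have y00 : y0 < 0 by lra.
have hs : s * y0 = L0 w by rewrite /s mulfVK // ltr0_neq0.
have s0 : 0 < s by rewrite /s -[L0 w]opprK -[y0]opprK mulNr -mulrN invrN opprK
  divr_gt0 // oppr_gt0.
have s1 : s < 1 by nra.
have s1' : 1 - s != 0 by rewrite subr_eq0 gt_eqF.
pose v := ((w.1 - s * y.1) / (1 - s), (w.2 - s * y.2) / (1 - s)).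
have hw : w = comb s v y by apply: pair_projE => /=; field.
have e0 := affine_comb s v y af0; rewrite -hw -/y0 in e0.
have e1 := affine_comb s v y af1; rewrite -hw -/y1 in e1.
have e2 := affine_comb s v y af2; rewrite -hw -/y2 in e2.
exists v; last by exists s => //; rewrite !ltW.
apply/(conv3P _ h); rewrite -/L0 -/L1 -/L2; split.
- rewrite -hs in e0.
  have : (1 - s) * L0 v = 0 by apply: (@addIr _ (s * y0)); rewrite add0r -e0.
  by move/eqP; rewrite mulf_eq0 (negbTE s1') /= => /eqP ->.
- have : (1 - s) * y0 * L1 v = L1 w * y0 - L0 w * y1 by rewrite -hs e1; ring.
  nra.
- have : (1 - s) * y0 * L2 v = L2 w * y0 - L0 w * y2 by rewrite -hs e2; ring.
  nra.
Qed.

Lemma conv3_edge_nbhs (a b c p y : pt) (K : set pt) :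
  cross a b c != 0 -> convex_set2 K -> conv3 a b c `<=` K -> K y ->
  bary a b c y < 0 -> bary a b c p = 0 -> 0 < bary b c a p -> 0 < bary c a b p ->
  nbhs p K.
Proof.
move=> h hK hQ hy hy0 hp0 hp1 hp2.
have af0 := affine_bary a b c; have af1 := affine_bary b c a.
have af2 := affine_bary c a b.
set L0 := bary a b c in af0 hy0 hp0 *; set L1 := bary b c a in af1 hp1 *.
set L2 := bary c a b in af2 hp2 *.
set y0 := L0 y in hy0 *; set y1 := L1 y; set y2 := L2 y.
have N1 := nbhs_affine_gt0 af1 hp1.
have N2 := nbhs_affine_gt0 af2 hp2.
have N3 := @nbhs_affine_gt0 (fun w => 1 * L0 w + 0 * L0 w + (- y0)) p
  (affine_lin _ _ _ af0 af0) ltac:(rewrite /= hp0; lra).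
have N4 := @nbhs_affine_gt0 (fun w => y1 * L0 w + (- y0) * L1 w + 0) p
  (affine_lin _ _ _ af0 af1) ltac:(rewrite /= hp0; nra).
have N5 := @nbhs_affine_gt0 (fun w => y2 * L0 w + (- y0) * L2 w + 0) p
  (affine_lin _ _ _ af0 af2) ltac:(rewrite /= hp0; nra).
apply: filterS (filterI N1 (filterI N2 (filterI N3 (filterI N4 N5)))).
move=> w [/= w1 [/= w2 [/= w3 [/= w4 w5]]]].
have [hw0|hw0] := leP 0 (L0 w).
  by apply: hQ; apply/(conv3P _ h); split => //; apply: ltW.
have k0 : y0 < L0 w by lra.
have k1 : 0 <= y1 * L0 w - y0 * L1 w by lra.
have k2 : 0 <= y2 * L0 w - y0 * L2 w by lra.
have [v hv [s hs ->]] := segment_from_conv3 h k0 hw0 k1 k2.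
exact: hK (hQ _ hv) hy hs.
Qed.

Lemma open_segment_interior (a b c z y : pt) (K : set pt) :
  cross a b c != 0 -> convex_set2 K -> conv3 a b c `<=` K -> K y ->
  bary a b c y < 0 -> open_segment b c z -> (K°) z.
Proof.
move=> h hK hQ hy hy0 [t /andP [t0 t1] ->].
have [e0 e1 e2] := bary_edge t h.
by apply: (conv3_edge_nbhs h hK hQ hy hy0 e0); rewrite ?e1 ?e2 //; lra.
Qed.

(* A triangle can only be enlarged beyond one of its edges, and then the lattice
   point in the relative interior of that edge becomes an interior point. *)
Lemma conv3_maximal_lattice_free (a b c z0 z1 z2 : pt) : cross a b c != 0 ->
  lattice_free (conv3 a b c) ->
  lattice_point z0 -> lattice_point z1 -> lattice_point z2 ->
  open_segment b c z0 -> open_segment c a z1 -> open_segment a b z2 ->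
  maximal_lattice_free (conv3 a b c).
Proof.
move=> h hlf l0 l1 l2 s0 s1 s2; split => // K [[_ hK _] hKlf] hsub.
have [hb hc] := cross_rot_neq0 h.
have hsub1 : conv3 b c a `<=` K by rewrite conv3_rot.
have hsub2 : conv3 c a b `<=` K by rewrite conv3_rot conv3_rot.
apply/seteqP; split => // y hy; apply/(conv3P _ h).
split; rewrite leNgt; apply/negP => hneg.
- exact: hKlf l0 (open_segment_interior h hK hsub hy hneg s0).
- exact: hKlf l1 (open_segment_interior hb hK hsub1 hy hneg s1).
- exact: hKlf l2 (open_segment_interior hc hK hsub2 hy hneg s2).
Qed.

End Barycentric.

Ltac int_closure := repeat first [assumption | exact: rpred1 | exact: intr_int |
  apply: rpredD | apply: rpredB | apply: rpredM | rewrite rpredN].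

Section EmptyTriangle.
Variable R : realType.
Local Notation pt := (R * R)%type.

Definition empty_lattice_triangle (a b c : pt) :=
  forall z, lattice_point z -> conv3 a b c z -> z = a \/ z = b \/ z = c.

Lemma latticeP (z : pt) : lattice_point z <-> z.1 \is a Num.int /\ z.2 \is a Num.int.
Proof.
split; first by case=> m [n ->]; rewrite !intr_int.
by case: z => z1 z2 /= [/intrP [m ->] /intrP [n ->]]; exists m, n.
Qed.

Lemma lattice_sub (u v : pt) : lattice_point u -> lattice_point v ->
  lattice_point (u.1 - v.1, u.2 - v.2).
Proof.
by move=> /latticeP [u1 u2] /latticeP [v1 v2]; apply/latticeP; rewrite !rpredB.
Qed.

Lemma lattice_lcomb3 m0 m1 m2 (a b c : pt) :
  lattice_point a -> lattice_point b -> lattice_point c ->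
  m0 \is a Num.int -> m1 \is a Num.int -> m2 \is a Num.int ->
  lattice_point (lcomb3 m0 m1 m2 a b c).
Proof.
move=> /latticeP [? ?] /latticeP [? ?] /latticeP [? ?] ? ? ?.
by apply/latticeP; rewrite /lcomb3 /=; split; int_closure.
Qed.

Lemma intr_cases (x : R) : x \is a Num.int -> [\/ x <= -1, x = 0 | 1 <= x].
Proof.
case/intrP=> k ->.
have [h|[->|h]] : (k <= -1 \/ k = 0 \/ 1 <= k)%R by lia.
- by apply: Or31; rewrite -(ler_int R) in h.
- exact: Or32.
- by apply: Or33; rewrite -(ler_int R) in h.
Qed.

Lemma intr_mul_eq1 (x y : R) : x \is a Num.int -> y \is a Num.int -> x * y = 1 ->
  x = 1 \/ x = -1.
Proof.
case/intrP=> k -> /intrP [l ->] e.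
have h : (k * l = 1)%R by apply: (@intr_inj R); rewrite intrM e.
have hk : (`|k| = 1)%N.
  by have := congr1 absz h; rewrite abszM /= => /eqP; rewrite muln_eq1 => /andP [/eqP].
have [->|->] : (k = 1 \/ k = -1)%R by lia.
- by left.
- by right.
Qed.

Definition frame_point (p0 p1 p2 : pt) s t := lcomb3 (1 - s - t) s t p0 p1 p2.

Lemma frame_point_shift (p0 p1 p2 : pt) s t k l :
  lattice_point p0 -> lattice_point p1 -> lattice_point p2 ->
  k \is a Num.int -> l \is a Num.int -> lattice_point (frame_point p0 p1 p2 s t) ->
  lattice_point (frame_point p0 p1 p2 (s + k) (t + l)).
Proof.
move=> l0 l1 l2 ik il hz; set z := frame_point _ _ _ s t in hz.
set m := lcomb3 (k + l) (- k) (- l) p0 p1 p2.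
have -> : frame_point p0 p1 p2 (s + k) (t + l) = (z.1 - m.1, z.2 - m.2).
  by apply: pair_projE => /=; ring.
by apply: lattice_sub hz (lattice_lcomb3 l0 l1 l2 _ _ _); int_closure.
Qed.

Lemma frame_point_opp (p0 p1 p2 : pt) s t :
  lattice_point p0 -> lattice_point p1 -> lattice_point p2 ->
  lattice_point (frame_point p0 p1 p2 s t) ->
  lattice_point (frame_point p0 p1 p2 (- s) (- t)).
Proof.
move=> l0 l1 l2 hz; set z := frame_point _ _ _ s t in hz.
set m := lcomb3 2 0 0 p0 p1 p2.
have -> : frame_point p0 p1 p2 (- s) (- t) = (m.1 - z.1, m.2 - z.2).
  by apply: pair_projE => /=; ring.
by apply: lattice_sub (lattice_lcomb3 l0 l1 l2 _ _ _) hz; int_closure.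
Qed.

Lemma empty_triangle_param (p0 p1 p2 : pt) s t : cross p0 p1 p2 != 0 ->
  empty_lattice_triangle p0 p1 p2 -> 0 <= s -> 0 <= t -> s + t <= 1 ->
  lattice_point (frame_point p0 p1 p2 s t) ->
  [\/ s = 0 /\ t = 0, s = 1 /\ t = 0 | s = 0 /\ t = 1].
Proof.
move=> h hE s0 t0 st hz; have [hb hc] := cross_rot_neq0 h.
set z := frame_point _ _ _ s t in hz.
have zs : bary p1 p2 p0 z = s by rewrite /z /frame_point lcomb3_rot baryE //; ring.
have zt : bary p2 p0 p1 z = t by rewrite /z /frame_point 2!lcomb3_rot baryE //; ring.
have [b1 b2 b0] := bary_vertices hb; have [c2 c0 c1] := bary_vertices hc.
have hzQ : conv3 p0 p1 p2 z by exists (1 - s - t), s, t; split => //; lra.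
case: (hE z hz hzQ) => [|[|]] ez; rewrite ez in zs zt.
- by apply: Or31; rewrite -zs -zt b0 c0.
- by apply: Or32; rewrite -zs -zt b1 c1.
- by apply: Or33; rewrite -zs -zt b2 c2.
Qed.

(* Reducing the coordinates of [z] modulo 1 gives a lattice point in the triangle
   or in its reflection through the midpoint of the edge [p1 p2]. *)
Lemma empty_triangle_bary_int (p0 p1 p2 z : pt) :
  lattice_point p0 -> lattice_point p1 -> lattice_point p2 ->
  cross p0 p1 p2 != 0 -> empty_lattice_triangle p0 p1 p2 -> lattice_point z ->
  [/\ bary p0 p1 p2 z \is a Num.int, bary p1 p2 p0 z \is a Num.int &
      bary p2 p0 p1 z \is a Num.int].
Proof.
move=> l0 l1 l2 h hE hz.
suff [ia ib] : bary p1 p2 p0 z \is a Num.int /\ bary p2 p0 p1 z \is a Num.int.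
  split => //; rewrite (_ : bary p0 p1 p2 z = 1 - bary p1 p2 p0 z - bary p2 p0 p1 z).
    by int_closure.
  by have := bary_sum z h; lra.
set al := bary p1 p2 p0 z; set be := bary p2 p0 p1 z.
have hf : lattice_point (frame_point p0 p1 p2 al be).
  rewrite /frame_point (_ : 1 - al - be = bary p0 p1 p2 z); last first.
    by have := bary_sum z h; rewrite -/al -/be; lra.
  by rewrite -bary_decomp.
set fa := al - (Num.floor al)%:~R; set fb := be - (Num.floor be)%:~R.
have fa0 : 0 <= fa by rewrite subr_ge0 floor_le.
have fa1 : fa < 1 by rewrite ltrBlDl -intrD1 floorD1_gt.
have fb0 : 0 <= fb by rewrite subr_ge0 floor_le.
have fb1 : fb < 1 by rewrite ltrBlDl -intrD1 floorD1_gt.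
suff [ea eb] : fa = 0 /\ fb = 0.
  by split; apply/intrP; [exists (Num.floor al) | exists (Num.floor be)];
    apply/eqP; rewrite -subr_eq0 -?/fa -?/fb ?ea ?eb.
have hfab : lattice_point (frame_point p0 p1 p2 fa fb).
  by apply: frame_point_shift => //; rewrite rpredN intr_int.
have [hle|hgt] := leP (fa + fb) 1.
  by case/(empty_triangle_param h hE fa0 fb0 hle): hfab => -[]; lra.
have hfab' : lattice_point (frame_point p0 p1 p2 (- fa + 1) (- fb + 1)).
  by apply: frame_point_shift; rewrite ?rpred1 //; exact: frame_point_opp.
have ga0 : 0 <= - fa + 1 by lra.
have gb0 : 0 <= - fb + 1 by lra.
have gab : (- fa + 1) + (- fb + 1) <= 1 by lra.
by case/(empty_triangle_param h hE ga0 gb0 gab): hfab' => -[]; lra.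
Qed.

(* The two barycentric coordinates of [p0 + e1] and of [p0 + e2] form the inverse
   of the edge matrix of the triangle; they are integers, hence so is its
   determinant [1 / cross p0 p1 p2]. *)
Lemma empty_triangle_unimodular (p0 p1 p2 : pt) :
  lattice_point p0 -> lattice_point p1 -> lattice_point p2 ->
  cross p0 p1 p2 != 0 -> empty_lattice_triangle p0 p1 p2 ->
  cross p0 p1 p2 = 1 \/ cross p0 p1 p2 = -1.
Proof.
move=> l0 l1 l2 h hE.
move: (l0) (l1) (l2) => /latticeP [x0 y0] /latticeP [x1 y1] /latticeP [x2 y2].
set e1 := (p0.1 + 1, p0.2); set e2 := (p0.1, p0.2 + 1).
have le1 : lattice_point e1 by apply/latticeP; rewrite /=; split; int_closure.
have le2 : lattice_point e2 by apply/latticeP; rewrite /=; split; int_closure.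
have [_ ia ib] := empty_triangle_bary_int l0 l1 l2 h hE le1.
have [_ ic id] := empty_triangle_bary_int l0 l1 l2 h hE le2.
have d_int : cross p0 p1 p2 \is a Num.int by rewrite /cross; int_closure.
set det := bary p1 p2 p0 e1 * bary p2 p0 p1 e2 - bary p2 p0 p1 e1 * bary p1 p2 p0 e2.
have det_int : det \is a Num.int by rewrite /det; int_closure.
apply: (intr_mul_eq1 d_int det_int).
rewrite /det /bary (cross_rot p0 p1 p2) (cross_rot p1 p2 p0) (cross_rot p0 p1 p2).
set d := cross p0 p1 p2 in h *.
have key : cross e1 p2 p0 * cross e2 p0 p1 - cross e1 p0 p1 * cross e2 p2 p0 = d.
  by rewrite /d /cross /=; ring.
transitivity ((cross e1 p2 p0 * cross e2 p0 p1 - cross e1 p0 p1 * cross e2 p2 p0) / d).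
  by field.
by rewrite key divff.
Qed.

Lemma unimodular_dual_point (p0 p1 p2 : pt) a b :
  lattice_point p0 -> lattice_point p1 -> lattice_point p2 ->
  cross p0 p1 p2 = 1 \/ cross p0 p1 p2 = -1 -> a \is a Num.int -> b \is a Num.int ->
  exists u : pt,
    [/\ lattice_point u, dot u p1 - dot u p0 = a & dot u p2 - dot u p0 = b].
Proof.
move=> l0 l1 l2 hd ia ib.
move: (l0) (l1) (l2) => /latticeP [x0 y0] /latticeP [x1 y1] /latticeP [x2 y2].
set d := cross p0 p1 p2 in hd.
have dd : d * d = 1 by case: hd => ->; ring.
exists (d * (a * (p2.2 - p0.2) - b * (p1.2 - p0.2)),
        d * (b * (p1.1 - p0.1) - a * (p2.1 - p0.1))); split.
- by apply/latticeP; rewrite /=; split; int_closure.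
- transitivity (a * (d * d)); last by rewrite dd mulr1.
  by rewrite /d /dot /cross /=; ring.
- transitivity (b * (d * d)); last by rewrite dd mulr1.
  by rewrite /d /dot /cross /=; ring.
Qed.

Lemma dot_diffs_eq0 (p0 p1 p2 u : pt) : cross p0 p1 p2 != 0 ->
  dot u p1 - dot u p0 = 0 -> dot u p2 - dot u p0 = 0 -> u = (0, 0).
Proof.
move=> h e1 e2.
have k1 : u.1 * cross p0 p1 p2 =
    (p2.2 - p0.2) * (dot u p1 - dot u p0) - (p1.2 - p0.2) * (dot u p2 - dot u p0).
  by rewrite /cross /dot; ring.
have k2 : u.2 * cross p0 p1 p2 =
    (p1.1 - p0.1) * (dot u p2 - dot u p0) - (p2.1 - p0.1) * (dot u p1 - dot u p0).
  by rewrite /cross /dot; ring.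
rewrite e1 e2 !mulr0 subrr in k1 k2.
move/eqP: k1; move/eqP: k2; rewrite !mulf_eq0 (negbTE h) !orbF => /eqP u2 /eqP u1.
exact: pair_projE.
Qed.

End EmptyTriangle.

Section PairSums.
Variable R : realType.

Definition pair_sums_gt1 (x0 x1 x2 : R) := [/\ 1 < x0 + x1, 1 < x0 + x2 & 1 < x1 + x2].
Definition pair_sums_lt1 (x0 x1 x2 : R) := [/\ x0 + x1 < 1, x0 + x2 < 1 & x1 + x2 < 1].

Lemma pair_sums_cases (x0 x1 x2 : R) :
  [\/ pair_sums_gt1 x0 x1 x2, pair_sums_lt1 x0 x1 x2 |
      [\/ 1 <= x0 + x2 /\ x0 + x1 <= 1, 1 <= x0 + x1 /\ x1 + x2 <= 1 |
          1 <= x1 + x2 /\ x0 + x2 <= 1]].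
Proof.
have : (1 < x0 + x1 /\ 1 < x0 + x2 /\ 1 < x1 + x2) \/
       (x0 + x1 < 1 /\ x0 + x2 < 1 /\ x1 + x2 < 1) \/
       (1 <= x0 + x2 /\ x0 + x1 <= 1) \/ (1 <= x0 + x1 /\ x1 + x2 <= 1) \/
       (1 <= x1 + x2 /\ x0 + x2 <= 1) by lra.
case=> [[? [? ?]]|[[? [? ?]]|[h|[h|h]]]].
- by apply: Or31; split.
- by apply: Or32; split.
- by apply/Or33/Or31.
- by apply/Or33/Or32.
- by apply/Or33/Or33.
Qed.

Lemma pair_sums_rot (x0 x1 x2 : R) :
  pair_sums_gt1 x0 x1 x2 \/ pair_sums_lt1 x0 x1 x2 ->
  pair_sums_gt1 x1 x2 x0 \/ pair_sums_lt1 x1 x2 x0.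
Proof. by case=> -[? ? ?]; [left | right]; split; lra. Qed.

(* [m1 x1 + m2 (1 - x2)], [m2 x2 + m0 (1 - x0)] and [m0 x0 + m1 (1 - x1)] are the
   barycentric coordinates in [Q] of the lattice point [m0 p0 + m1 p1 + m2 p2]. *)
Lemma pair_sums_coef_ge0 (x0 x1 x2 m0 m1 m2 : R) :
  0 < x0 < 1 -> 0 < x1 < 1 -> 0 < x2 < 1 ->
  pair_sums_gt1 x0 x1 x2 \/ pair_sums_lt1 x0 x1 x2 ->
  m1 \is a Num.int -> m2 \is a Num.int -> m0 + m1 + m2 = 1 ->
  0 <= m1 * x1 + m2 * (1 - x2) -> 0 <= m2 * x2 + m0 * (1 - x0) ->
  0 <= m0 * x0 + m1 * (1 - x1) -> 0 <= m0.
Proof.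
move=> /andP [? ?] /andP [? ?] /andP [? ?] hc z1 z2 hs l0 l1 l2.
have z0 : m0 \is a Num.int by rewrite (_ : m0 = 1 - m1 - m2); [int_closure | lra].
rewrite leNgt; apply/negP => hneg.
have hm0 : m0 <= -1 by case: (intr_cases z0) => [//|?|?]; lra.
case: (intr_cases z1) => [c1|c1|c1].
- have : m0 * x0 <= - x0 by nra.
  have : m1 * (1 - x1) <= - (1 - x1) by nra.
  lra.
- by rewrite c1 in l2; nra.
case: (intr_cases z2) => [c2|c2|c2].
- have : m2 * x2 <= - x2 by nra.
  have : m0 * (1 - x0) <= - (1 - x0) by nra.
  lra.
- by rewrite c2 in l1; nra.
case: hc => -[? ? ?].
- have : m1 * (1 - x1) <= - m0 * (1 - x1) by nra.
  have : m0 * (x0 + x1 - 1) < 0 by nra.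
  nra.
- have : m2 * x2 <= - m0 * x2 by nra.
  have : m0 * (1 - x0 - x2) < 0 by nra.
  nra.
Qed.

Lemma pair_sums_coef_unit (x0 x1 x2 m0 m1 m2 : R) :
  0 < x0 < 1 -> 0 < x1 < 1 -> 0 < x2 < 1 ->
  pair_sums_gt1 x0 x1 x2 \/ pair_sums_lt1 x0 x1 x2 ->
  m0 \is a Num.int -> m1 \is a Num.int -> m2 \is a Num.int -> m0 + m1 + m2 = 1 ->
  0 <= m1 * x1 + m2 * (1 - x2) -> 0 <= m2 * x2 + m0 * (1 - x0) ->
  0 <= m0 * x0 + m1 * (1 - x1) ->
  [\/ [/\ m0 = 1, m1 = 0 & m2 = 0], [/\ m0 = 0, m1 = 1 & m2 = 0] |
      [/\ m0 = 0, m1 = 0 & m2 = 1]].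
Proof.
move=> hx0 hx1 hx2 hc z0 z1 z2 hs l0 l1 l2.
have hc1 := pair_sums_rot hc; have hc2 := pair_sums_rot hc1.
have g0 := pair_sums_coef_ge0 hx0 hx1 hx2 hc z1 z2 hs l0 l1 l2.
have g1 : 0 <= m1 by apply: (pair_sums_coef_ge0 hx1 hx2 hx0 hc1 z2 z0) => //; lra.
have g2 : 0 <= m2 by apply: (pair_sums_coef_ge0 hx2 hx0 hx1 hc2 z0 z1) => //; lra.
case: (intr_cases z0) => [?|e0|?]; case: (intr_cases z1) => [?|e1|?];
  case: (intr_cases z2) => [?|e2|?]; try lra.
- by apply: Or33; split => //; lra.
- by apply: Or32; split => //; lra.
- by apply: Or31; split => //; lra.
Qed.

End PairSums.

Section Width.
Variable R : realType.
Local Notation pt := (R * R)%type.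

Lemma exists_max3 (g0 g1 g2 : R) :
  exists2 M, M \in [:: g0; g1; g2] & [/\ g0 <= M, g1 <= M & g2 <= M].
Proof.
have [h01|h01] := leP g0 g1; have [h12|h12] := leP g1 g2; have [h02|h02] := leP g0 g2;
  first [ by exists g0; rewrite ?inE ?eqxx //; split; lra
        | by exists g1; rewrite ?inE ?eqxx ?orbT //; split; lra
        | by exists g2; rewrite ?inE ?eqxx ?orbT //; split; lra ].
Qed.

Lemma width_dir_conv3_le (a b c u : pt) (K : R) :
  width_dir (conv3 a b c) u <= K <->
  [/\ `|dot u a - dot u b| <= K, `|dot u a - dot u c| <= K &
      `|dot u c - dot u b| <= K].
Proof.
set g0 := dot u a; set g1 := dot u b; set g2 := dot u c.
set S := [set dot u x | x in conv3 a b c].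
have inS : [/\ S g0, S g1 & S g2].
  split; [exists a | exists b | exists c] => //;
    [exists 1, 0, 0 | exists 0, 1, 0 | exists 0, 0, 1];
    (split; [lra | lra | lra | lra | apply: pair_projE => /=; ring]).
have [Sg0 Sg1 Sg2] := inS.
have Scomb s : S s -> exists l0 l1 l2, [/\ 0 <= l0, 0 <= l1, 0 <= l2,
    l0 + l1 + l2 = 1 & s = l0 * g0 + l1 * g1 + l2 * g2].
  case=> x [l0 [l1 [l2 [h0 h1 h2 hs ->]]]] <-.
  by exists l0, l1, l2; split => //; rewrite /g0 /g1 /g2 /dot /=; ring.
have ub M : g0 <= M -> g1 <= M -> g2 <= M -> ubound S M.
  move=> m0 m1 m2 s /Scomb [l0 [l1 [l2 [h0 h1 h2 hs ->]]]].
  have := ler_wpM2l h0 m0; have := ler_wpM2l h1 m1; have := ler_wpM2l h2 m2.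
  have : l0 * M + l1 * M + l2 * M = M by rewrite -!mulrDl hs mul1r.
  lra.
have lb M : M <= g0 -> M <= g1 -> M <= g2 -> lbound S M.
  move=> m0 m1 m2 s /Scomb [l0 [l1 [l2 [h0 h1 h2 hs ->]]]].
  have := ler_wpM2l h0 m0; have := ler_wpM2l h1 m1; have := ler_wpM2l h2 m2.
  have : l0 * M + l1 * M + l2 * M = M by rewrite -!mulrDl hs mul1r.
  lra.
have [Mx hMx [Mx0 Mx1 Mx2]] := exists_max3 g0 g1 g2.
have [mn hmn [mn0 mn1 mn2]] := exists_max3 (- g0) (- g1) (- g2).
have hsup : has_sup S by split; [exists g0 | exists Mx; apply: ub].
have hinf : has_inf S by split; [exists g0 | exists (- mn); apply: lb; lra].
have sup_ge s : S s -> s <= sup S by move=> ?; apply: sup_upper_bound.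
have inf_le s : S s -> inf S <= s by move=> ?; apply: ge_inf => //; case: hinf.
rewrite /width_dir -/S !ler_norml; split.
- have := sup_ge _ Sg0; have := sup_ge _ Sg1; have := sup_ge _ Sg2.
  have := inf_le _ Sg0; have := inf_le _ Sg1; have := inf_le _ Sg2.
  by move=> *; split; apply/andP; split; lra.
- case=> /andP [? ?] /andP [? ?] /andP [? ?].
  have : sup S <= Mx by apply: ge_sup; [exists g0 | apply: ub].
  have : - mn <= inf S by apply: lb_le_inf; [exists g0 | apply: lb; lra].
  move: hMx hmn; rewrite !inE => /or3P [] /eqP -> /or3P [] /eqP ->; lra.
Qed.

Definition wdenom (x0 x1 x2 : R) :=
  x0 * x1 * x2 + (1 - x0) * (1 - x1) * (1 - x2).

Lemma wdenom_gt0 (x0 x1 x2 : R) : 0 < x0 < 1 -> 0 < x1 < 1 -> 0 < x2 < 1 ->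
  0 < wdenom x0 x1 x2.
Proof.
move=> /andP [? ?] /andP [? ?] /andP [? ?]; rewrite /wdenom.
have : 0 < x0 * x1 * x2 by rewrite !mulr_gt0.
have : 0 < (1 - x0) * (1 - x1) * (1 - x2) by rewrite !mulr_gt0 // subr_gt0.
lra.
Qed.

(* With [g i = dot u qi], [a = dot u (p1 - p0)] and [b = dot u (p2 - p0)], the three
   quantities below are [wdenom x0 x1 x2] times [g 0 - g 1], [g 0 - g 2] and
   [g 2 - g 1]. *)
Definition width_ineqs (x0 x1 x2 a b K : R) :=
  [/\ `|x0 * a - (x0 + x1 - 1) * b| <= K, `|(x0 + x2 - 1) * a + (1 - x0) * b| <= K &
      `|(1 - x2) * a - x1 * b| <= K].

Lemma width_ineqs_min_le (x0 x1 x2 a b K : R) :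
  0 < x0 < 1 -> 0 < x1 < 1 -> 0 < x2 < 1 -> pair_sums_gt1 x0 x1 x2 ->
  a \is a Num.int -> b \is a Num.int -> ~ (a = 0 /\ b = 0) ->
  width_ineqs x0 x1 x2 a b K -> Num.min x0 (Num.min x1 x2) <= K.
Proof.
move=> /andP [? ?] /andP [? ?] /andP [? ?] [? ? ?] za zb nab.
rewrite /width_ineqs !ler_norml => -[/andP [? ?] /andP [? ?] /andP [? ?]].
rewrite !ge_min; apply/or3P.
case: (intr_cases za) => [ca|ca|ca]; case: (intr_cases zb) => [cb|cb|cb].
- by apply: Or33; nra.
- by apply: Or31; subst b; nra.
- by apply: Or32; nra.
- by apply: Or32; subst a; nra.
- by case: nab.
- by apply: Or32; subst a; nra.
- by apply: Or32; nra.
- by apply: Or31; subst b; nra.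
- by apply: Or33; nra.
Qed.

Lemma min3_cases (x0 x1 x2 : R) :
  [\/ Num.min x0 (Num.min x1 x2) = x0 /\ x0 <= x1 /\ x0 <= x2,
      Num.min x0 (Num.min x1 x2) = x1 /\ x1 <= x0 /\ x1 <= x2 |
      Num.min x0 (Num.min x1 x2) = x2 /\ x2 <= x0 /\ x2 <= x1].
Proof.
rewrite /Order.min; case: (ltP x1 x2) => h12; case: (ltP x0 x1) => h01;
  case: (ltP x0 x2) => h02;
  first [ by apply: Or31; split; lra | by apply: Or32; split; lra
        | by apply: Or33; split; lra ].
Qed.

Lemma width_ineqs_attained (x0 x1 x2 : R) :
  0 < x0 < 1 -> 0 < x1 < 1 -> 0 < x2 < 1 -> pair_sums_gt1 x0 x1 x2 ->
  let m := Num.min x0 (Num.min x1 x2) in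
  [\/ width_ineqs x0 x1 x2 1 0 m, width_ineqs x0 x1 x2 0 1 m |
      width_ineqs x0 x1 x2 1 1 m].
Proof.
move=> /andP [? ?] /andP [? ?] /andP [? ?] [? ? ?] m.
rewrite /width_ineqs /m !ler_norml.
by case: (min3_cases x0 x1 x2) => -[-> [? ?]];
  [apply: Or31 | apply: Or32 | apply: Or33]; split; apply/andP; split; lra.
Qed.

End Width.

Section SqrtBound.
Variable R : realType.

Lemma inv_sqrt3 : 3 * (1 / Num.sqrt 3) ^+ 2 = 1 :> R /\ 1 / 2 < 1 / Num.sqrt 3 :> R.
Proof.
have s0 : 0 < Num.sqrt 3 :> R by rewrite sqrtr_gt0.
have s2 : Num.sqrt 3 ^+ 2 = 3 :> R by rewrite sqr_sqrtr.
have t2 : 3 * (1 / Num.sqrt 3) ^+ 2 = 1 :> R.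
  by rewrite expr_div_n s2 expr1n mulrC divfK // pnatr_eq0.
split => //; have t0 : 0 < 1 / Num.sqrt 3 :> R by rewrite divr_gt0.
by move: t0 t2; set t := 1 / _ => t0; rewrite expr2 => t2; nra.
Qed.

(* For [x >= 1/2], [wdenom x y z] dominates its value [3 x^2 - 3 x + 1] at
   [y = z = x], and [(1 + 2 t) (3 x^2 - 3 x + 1) - x = 3 (1 + 2 t) (x - t)^2]
   for [t = 1 / sqrt 3]. *)
Lemma wdenom_bound (x y z : R) : 0 < x < 1 -> 0 < y < 1 -> 0 < z < 1 ->
  x <= y -> x <= z -> 1 < x + y -> 1 < x + z ->
  x <= (1 + 2 / Num.sqrt 3) * wdenom x y z /\
  (x = (1 + 2 / Num.sqrt 3) * wdenom x y z -> [/\ x = 1 / Num.sqrt 3, y = x & z = x]).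
Proof.
move=> /andP [x0 x1] /andP [y0 y1] /andP [z0 z1] xy xz sxy sxz.
have [t2 th] := inv_sqrt3; set t := 1 / _ in t2 th *.
have -> : 2 / Num.sqrt 3 = 2 * t :> R by rewrite /t mul1r.
set c := 1 + 2 * t; set D := wdenom x y z; set q := 3 * x ^+ 2 - 3 * x + 1.
have c0 : 0 < c by rewrite /c; lra.
have [hx|hx] := ltP x (1 / 2).
  have hD : x * (1 - x) < D.
    have : 0 < (y - (1 - x)) * (x + z - 1) by apply: mulr_gt0; lra.
    by rewrite /D /wdenom; nra.
  have : 1 < c * (1 - x) by rewrite /c; nra.
  by split => [|e]; nra.
have hq : c * q - x = 3 * c * (x - t) ^+ 2.
  have -> : c * q - x = 3 * c * (x - t) ^+ 2 + (1 - 3 * t ^+ 2) * (c - 4 * x).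
    by rewrite /c /q; ring.
  by rewrite t2 subrr mul0r addr0.
have hDq : D - q = (y - x) * (x + z - 1) + (z - x) * (2 * x - 1).
  by rewrite /D /wdenom /q; ring.
have h1 : 0 <= (y - x) * (x + z - 1) by apply: mulr_ge0; lra.
have h2 : 0 <= (z - x) * (2 * x - 1) by apply: mulr_ge0; lra.
have h3 : 0 <= 3 * c * (x - t) ^+ 2 by apply: mulr_ge0; [lra | exact: sqr_ge0].
have hsum : c * D - x = c * (D - q) + 3 * c * (x - t) ^+ 2 by rewrite -hq; ring.
have h4 : 0 <= c * (D - q).
  by rewrite hDq; apply: mulr_ge0; [exact: ltW | exact: addr_ge0].
split => [|e]; first lra.
have /eqP : c * (D - q) + 3 * c * (x - t) ^+ 2 = 0 by rewrite -hsum -e subrr.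
rewrite paddr_eq0 // => /andP [/eqP e1 /eqP e2].
move/eqP: e2; rewrite -mulrA mulf_eq0 pnatr_eq0 /= mulf_eq0 (gt_eqF c0) /=.
rewrite sqrf_eq0 subr_eq0 => /eqP ext.
move/eqP: e1; rewrite mulf_eq0 (gt_eqF c0) /= hDq paddr_eq0 // !mulf_eq0.
case/andP => /orP e1 /orP e2.
split => //; [case: e1 | case: e2] => /eqP; lra.
Qed.

Lemma wdenom_rot (x0 x1 x2 : R) : wdenom x1 x2 x0 = wdenom x0 x1 x2.
Proof. by rewrite /wdenom; ring. Qed.

Lemma min_div_wdenom_le (x0 x1 x2 : R) :
  0 < x0 < 1 -> 0 < x1 < 1 -> 0 < x2 < 1 -> pair_sums_gt1 x0 x1 x2 ->
  let w := Num.min x0 (Num.min x1 x2) / wdenom x0 x1 x2 in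
  w <= 1 + 2 / Num.sqrt 3 /\
  (w = 1 + 2 / Num.sqrt 3 <->
    [/\ x0 = 1 / Num.sqrt 3, x1 = 1 / Num.sqrt 3 & x2 = 1 / Num.sqrt 3]).
Proof.
move=> hx0 hx1 hx2 [s01 s02 s12] w.
have D0 := wdenom_gt0 hx0 hx1 hx2.
have [t2 _] := inv_sqrt3; set t := 1 / _ in t2 *.
have wE c : (w <= c) = (Num.min x0 (Num.min x1 x2) <= c * wdenom x0 x1 x2).
  by rewrite /w ler_pdivrMr // mulrC.
have wE' c : (w = c) <-> (Num.min x0 (Num.min x1 x2) = c * wdenom x0 x1 x2).
  by rewrite /w; split => [<-|->]; rewrite ?divfK ?mulfK // gt_eqF.
have attain : wdenom t t t * (1 + 2 / Num.sqrt 3) = t.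
  have -> : 2 / Num.sqrt 3 = 2 * t :> R by rewrite /t mul1r.
  have -> : wdenom t t t * (1 + 2 * t) = t + (1 - 3 * t ^+ 2) * (1 - 2 * t).
    by rewrite /wdenom; ring.
  by rewrite t2 subrr mul0r addr0.
rewrite wE wE'; case: (min3_cases x0 x1 x2) => -[-> [h1 h2]].
- have [le eq] := wdenom_bound hx0 hx1 hx2 h1 h2 s01 s02.
  split=> //; split=> [/eq [e e' e'']|[-> -> ->]]; first by split; rewrite ?e' ?e'' e.
  by rewrite mulrC attain.
- rewrite -wdenom_rot.
  have s10 : 1 < x1 + x0 by lra.
  have [le eq] := wdenom_bound hx1 hx2 hx0 h2 h1 s12 s10.
  split=> //; split=> [/eq [e e' e'']|[-> -> ->]]; first by split; rewrite ?e' ?e'' e.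
  by rewrite mulrC attain.
- rewrite -2!wdenom_rot.
  have s20 : 1 < x2 + x0 by lra.
  have s21 : 1 < x2 + x1 by lra.
  have [le eq] := wdenom_bound hx2 hx0 hx1 h1 h2 s20 s21.
  split=> //; split=> [/eq [e e' e'']|[-> -> ->]]; first by split; rewrite ?e' ?e'' e.
  by rewrite mulrC attain.
Qed.

End SqrtBound.

Section CircumscribedTriangle.
Variable R : realType.
Local Notation pt := (R * R)%type.
Variables (p0 p1 p2 q0 q1 q2 : pt) (x0 x1 x2 : R).
Hypotheses (lp0 : lattice_point p0) (lp1 : lattice_point p1) (lp2 : lattice_point p2).
Hypotheses (ndP : cross p0 p1 p2 != 0) (emptyP : empty_lattice_triangle p0 p1 p2).
Hypothesis ndQ : cross q0 q1 q2 != 0.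
Hypotheses (hp0 : p0 = comb x0 q1 q2) (hp1 : p1 = comb x1 q2 q0).
Hypothesis hp2 : p2 = comb x2 q0 q1.
Hypotheses (hx0 : 0 < x0 < 1) (hx1 : 0 < x1 < 1) (hx2 : 0 < x2 < 1).

Local Notation Q := (conv3 q0 q1 q2).

Lemma bary_Q_lcomb m0 m1 m2 : m0 + m1 + m2 = 1 ->
  let z := lcomb3 m0 m1 m2 p0 p1 p2 in
  [/\ bary q0 q1 q2 z = m1 * x1 + m2 * (1 - x2),
      bary q1 q2 q0 z = m2 * x2 + m0 * (1 - x0) &
      bary q2 q0 q1 z = m0 * x0 + m1 * (1 - x1)].
Proof.
move=> hs z; have [hb hc] := cross_rot_neq0 ndQ.
set l0 := m1 * x1 + m2 * (1 - x2); set l1 := m2 * x2 + m0 * (1 - x0).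
set l2 := m0 * x0 + m1 * (1 - x1).
have hs0 : l0 + l1 + l2 = 1 by rewrite /l0 /l1 /l2; lra.
have hs1 : l1 + l2 + l0 = 1 by lra.
have hs2 : l2 + l0 + l1 = 1 by lra.
have -> : z = lcomb3 l0 l1 l2 q0 q1 q2.
  by rewrite /z /l0 /l1 /l2 hp0 hp1 hp2; apply: pair_projE => /=; ring.
by rewrite baryE // lcomb3_rot baryE // lcomb3_rot baryE.
Qed.

Lemma bary_Q_p :
  [/\ [/\ bary q0 q1 q2 p0 = 0, bary q1 q2 q0 p0 = 1 - x0 & bary q2 q0 q1 p0 = x0],
      [/\ bary q0 q1 q2 p1 = x1, bary q1 q2 q0 p1 = 0 & bary q2 q0 q1 p1 = 1 - x1] &
      [/\ bary q0 q1 q2 p2 = 1 - x2, bary q1 q2 q0 p2 = x2 & bary q2 q0 q1 p2 = 0]].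
Proof.
have [hb hc] := cross_rot_neq0 ndQ.
have [a0 a1 a2] := bary_edge x0 ndQ; have [b1 b2 b0] := bary_edge x1 hb.
have [c2 c0 c1] := bary_edge x2 hc.
by rewrite hp0 hp1 hp2.
Qed.

Lemma lattice_Q_cases z : lattice_point z -> Q z ->
  exists m0 m1 m2, [/\ m0 \is a Num.int, m1 \is a Num.int, m2 \is a Num.int,
    m0 + m1 + m2 = 1 & z = lcomb3 m0 m1 m2 p0 p1 p2] /\
  [/\ 0 <= m1 * x1 + m2 * (1 - x2), 0 <= m2 * x2 + m0 * (1 - x0) &
      0 <= m0 * x0 + m1 * (1 - x1)].
Proof.
move=> hz /(conv3P _ ndQ) [k0 k1 k2].
have [i0 i1 i2] := empty_triangle_bary_int lp0 lp1 lp2 ndP emptyP hz.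
have hs := bary_sum z ndP; have ez := bary_decomp z ndP.
exists (bary p0 p1 p2 z), (bary p1 p2 p0 z), (bary p2 p0 p1 z); split => //.
by have [<- <- <-] := bary_Q_lcomb hs; rewrite -ez.
Qed.

Lemma lattice_Q_vertices : pair_sums_gt1 x0 x1 x2 \/ pair_sums_lt1 x0 x1 x2 ->
  forall z, lattice_point z -> Q z -> z = p0 \/ z = p1 \/ z = p2.
Proof.
move=> hc z hz Qz.
have [m0 [m1 [m2 [[i0 i1 i2 hs ->] [k0 k1 k2]]]]] := lattice_Q_cases hz Qz.
case: (pair_sums_coef_unit hx0 hx1 hx2 hc i0 i1 i2 hs k0 k1 k2) => -[e0 e1 e2].
- by left; rewrite lcomb3_vertex.
- by right; left; rewrite lcomb3_rot lcomb3_vertex.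
- by right; right; rewrite 2!lcomb3_rot lcomb3_vertex.
Qed.

Lemma Q_lattice_free : pair_sums_gt1 x0 x1 x2 \/ pair_sums_lt1 x0 x1 x2 ->
  lattice_free Q.
Proof.
move=> hc; split; first exact: conv3_ccbody.
move=> z hz /(interior_conv3P _ ndQ) [k0 k1 k2].
have Qz : Q z by apply/(conv3P _ ndQ); split; apply: ltW.
have [[a0 _ _] [_ b1 _] [_ _ c2]] := bary_Q_p.
by case: (lattice_Q_vertices hc hz Qz) => [|[|]] ez; rewrite ez in k0 k1 k2; lra.
Qed.

Lemma pair_sums_type3 : pair_sums_gt1 x0 x1 x2 \/ pair_sums_lt1 x0 x1 x2 ->
  mlf_triangle_type3 q0 q1 q2.
Proof.
move=> hc.
have s0 : open_segment q1 q2 p0 by exists x0.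
have s1 : open_segment q2 q0 p1 by exists x1.
have s2 : open_segment q0 q1 p2 by exists x2.
split => //.
- exact: conv3_maximal_lattice_free ndQ (Q_lattice_free hc) lp0 lp1 lp2 s0 s1 s2.
- exists p0, p1, p2; split => // z hz Qz _; exact: lattice_Q_vertices.
Qed.

Lemma type3_lattice_Q : mlf_triangle_type3 q0 q1 q2 ->
  forall z, lattice_point z -> Q z -> z = p0 \/ z = p1 \/ z = p2.
Proof.
case=> _ [[_ hlf] _] [z0 [z1 [z2 [[l0 s0] [l1 s1] [l2 s2] hT]]]].
have [hb hc] := cross_rot_neq0 ndQ.
have allz z : lattice_point z -> Q z -> z = z0 \/ z = z1 \/ z = z2.
  by move=> hz Qz; apply: hT => //; apply: hlf.
have [L0 L1 L2] :
    [/\ bary q0 q1 q2 z0 = 0, bary q1 q2 q0 z1 = 0 & bary q2 q0 q1 z2 = 0].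
  case: s0 => t0 _ ->; case: s1 => t1 _ ->; case: s2 => t2 _ ->.
  by case: (bary_edge t0 ndQ) => -> _ _; case: (bary_edge t1 hb) => -> _ _;
    case: (bary_edge t2 hc) => -> _ _.
have [[a0 a1 a2] [b0 b1 b2] [c0 c1 c2]] := bary_Q_p.
move: hx0 hx1 hx2 => /andP [? ?] /andP [? ?] /andP [? ?].
have Qp0 : Q p0 by apply/(conv3P _ ndQ); rewrite a0 a1 a2; split; lra.
have Qp1 : Q p1 by apply/(conv3P _ ndQ); rewrite b0 b1 b2; split; lra.
have Qp2 : Q p2 by apply/(conv3P _ ndQ); rewrite c0 c1 c2; split; lra.
have e0 : z0 = p0.
  case: (allz _ lp0 Qp0) => [->|[e|e]] //; exfalso;
    [move: L1 | move: L2]; rewrite -{}e; lra.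
have e1 : z1 = p1.
  case: (allz _ lp1 Qp1) => [e|[->|e]] //; exfalso;
    [move: L0 | move: L2]; rewrite -{}e; lra.
have e2 : z2 = p2.
  case: (allz _ lp2 Qp2) => [e|[e|->]] //; exfalso;
    [move: L0 | move: L1]; rewrite -{}e; lra.
by move=> z hz Qz; rewrite -e0 -e1 -e2; exact: allz.
Qed.

Lemma type3_coef_unit m0 m1 m2 : mlf_triangle_type3 q0 q1 q2 ->
  m0 \is a Num.int -> m1 \is a Num.int -> m2 \is a Num.int -> m0 + m1 + m2 = 1 ->
  0 <= m1 * x1 + m2 * (1 - x2) -> 0 <= m2 * x2 + m0 * (1 - x0) ->
  0 <= m0 * x0 + m1 * (1 - x1) ->
  [\/ [/\ m0 = 1, m1 = 0 & m2 = 0], [/\ m0 = 0, m1 = 1 & m2 = 0] |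
      [/\ m0 = 0, m1 = 0 & m2 = 1]].
Proof.
move=> H i0 i1 i2 hs k0 k1 k2.
set z := lcomb3 m0 m1 m2 p0 p1 p2.
have hz : lattice_point z := lattice_lcomb3 lp0 lp1 lp2 i0 i1 i2.
have Qz : Q z.
  by have [B0 B1 B2] := bary_Q_lcomb hs; apply/(conv3P _ ndQ); rewrite B0 B1 B2.
have [hb hc] := cross_rot_neq0 ndP.
have P0 : bary p0 p1 p2 z = m0 by rewrite baryE.
have P1 : bary p1 p2 p0 z = m1 by rewrite /z lcomb3_rot baryE //; lra.
have P2 : bary p2 p0 p1 z = m2 by rewrite /z 2!lcomb3_rot baryE //; lra.
have [v00 v01 v02] := bary_vertices ndP; have [v11 v12 v10] := bary_vertices hb.
have [v22 v20 v21] := bary_vertices hc.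
case: (type3_lattice_Q H hz Qz) => [|[|]] e; rewrite e in P0 P1 P2.
- by apply: Or31; rewrite -P0 -P1 -P2.
- by apply: Or32; rewrite -P0 -P1 -P2.
- by apply: Or33; rewrite -P0 -P1 -P2.
Qed.

Lemma type3_pair_sums : mlf_triangle_type3 q0 q1 q2 ->
  pair_sums_gt1 x0 x1 x2 \/ pair_sums_lt1 x0 x1 x2.
Proof.
move=> H.
have iN : (-1 : R) \is a Num.int by rewrite rpredN rpred1.
have i1 : (1 : R) \is a Num.int by rewrite rpred1.
have no_neg m0 m1 m2 : m0 \is a Num.int -> m1 \is a Num.int -> m2 \is a Num.int ->
    m0 + m1 + m2 = 1 -> m0 < 0 \/ m1 < 0 \/ m2 < 0 ->
    0 <= m1 * x1 + m2 * (1 - x2) -> 0 <= m2 * x2 + m0 * (1 - x0) ->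
    0 <= m0 * x0 + m1 * (1 - x1) -> False.
  move=> z0 z1 z2 hs neg k0 k1 k2.
  by move: neg; case: (type3_coef_unit H z0 z1 z2 hs k0 k1 k2) => -[-> -> ->]; lra.
move: hx0 hx1 hx2 => /andP [? ?] /andP [? ?] /andP [? ?].
case: (pair_sums_cases x0 x1 x2) => [| |[[? ?]|[? ?]|[? ?]]]; [by left | by right | ..];
  exfalso.
- by apply: (no_neg (-1) 1 1) => //; lra.
- by apply: (no_neg 1 (-1) 1) => //; lra.
- by apply: (no_neg 1 1 (-1)) => //; lra.
Qed.

Lemma width_dir_Q_le u K :
  width_dir Q u <= K <-> width_ineqs x0 x1 x2 (dot u p1 - dot u p0)
    (dot u p2 - dot u p0) (wdenom x0 x1 x2 * K).
Proof.
have D0 := wdenom_gt0 hx0 hx1 hx2.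
have dp : [/\ dot u p0 = (1 - x0) * dot u q1 + x0 * dot u q2,
    dot u p1 = (1 - x1) * dot u q2 + x1 * dot u q0 &
    dot u p2 = (1 - x2) * dot u q0 + x2 * dot u q1].
  by rewrite hp0 hp1 hp2 !affine_comb //; exact: affine_dot.
have [-> -> ->] := dp.
rewrite width_dir_conv3_le /width_ineqs.
have absE y : (`|y| <= K) = (`|wdenom x0 x1 x2 * y| <= wdenom x0 x1 x2 * K).
  by rewrite normrM gtr0_norm // ler_pM2l.
rewrite !absE; set D := wdenom x0 x1 x2.
set g0 := dot u q0; set g1 := dot u q1; set g2 := dot u q2.
have -> : D * (g0 - g1) = x0 * ((1 - x1) * g2 + x1 * g0 - ((1 - x0) * g1 + x0 * g2))
    - (x0 + x1 - 1) * ((1 - x2) * g0 + x2 * g1 - ((1 - x0) * g1 + x0 * g2)).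
  by rewrite /D /wdenom; ring.
have -> : D * (g0 - g2) = (x0 + x2 - 1) * ((1 - x1) * g2 + x1 * g0 -
    ((1 - x0) * g1 + x0 * g2)) + (1 - x0) * ((1 - x2) * g0 + x2 * g1 -
    ((1 - x0) * g1 + x0 * g2)).
  by rewrite /D /wdenom; ring.
have -> : D * (g2 - g1) = (1 - x2) * ((1 - x1) * g2 + x1 * g0 -
    ((1 - x0) * g1 + x0 * g2)) - x1 * ((1 - x2) * g0 + x2 * g1 -
    ((1 - x0) * g1 + x0 * g2)).
  by rewrite /D /wdenom; ring.
by [].
Qed.

Lemma lattice_width_Q : pair_sums_gt1 x0 x1 x2 ->
  lattice_width Q = Num.min x0 (Num.min x1 x2) / wdenom x0 x1 x2.
Proof.
move=> hc; have D0 := wdenom_gt0 hx0 hx1 hx2.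
set w := _ / _; rewrite /lattice_width; set T := [set width_dir Q u | u in _].
have lbT : lbound T w.
  move=> _ [u [hu u0] <-].
  move: (hu) (lp0) (lp1) (lp2) => /latticeP [? ?] /latticeP [? ?] /latticeP [? ?]
    /latticeP [? ?].
  have ia : dot u p1 - dot u p0 \is a Num.int by rewrite /dot; int_closure.
  have ib : dot u p2 - dot u p0 \is a Num.int by rewrite /dot; int_closure.
  have ab : ~ (dot u p1 - dot u p0 = 0 /\ dot u p2 - dot u p0 = 0).
    by move=> [a0 b0]; exact/u0/(dot_diffs_eq0 ndP a0 b0).
  rewrite ler_pdivrMr // mulrC.
  by apply: (width_ineqs_min_le hx0 hx1 hx2 hc ia ib ab); apply/width_dir_Q_le.
have [u [Tu Wu]] : exists u, T (width_dir Q u) /\ width_dir Q u <= w.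
  have unimod := empty_triangle_unimodular lp0 lp1 lp2 ndP emptyP.
  have iN1 : (1 : R) \is a Num.int by rewrite rpred1.
  have iN0 : (0 : R) \is a Num.int by rewrite rpred0.
  have pick a b : a \is a Num.int -> b \is a Num.int -> ~ (a = 0 /\ b = 0) ->
      width_ineqs x0 x1 x2 a b (Num.min x0 (Num.min x1 x2)) ->
      exists u, T (width_dir Q u) /\ width_dir Q u <= w.
    move=> ia ib ab hab.
    have [u [hu ua ub]] := unimodular_dual_point lp0 lp1 lp2 unimod ia ib.
    exists u; split; last by apply/width_dir_Q_le; rewrite ua ub /w mulrC divfK ?gt_eqF.
    exists u => //; split => // u0; apply: ab; rewrite -ua -ub u0 /dot /=.
    by rewrite !mul0r !addr0 subrr.
  have n10 : ~ ((1 : R) = 0 /\ (0 : R) = 0) by case=> /eqP; rewrite oner_eq0.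
  have n01 : ~ ((0 : R) = 0 /\ (1 : R) = 0) by case=> _ /eqP; rewrite oner_eq0.
  have n11 : ~ ((1 : R) = 0 /\ (1 : R) = 0) by case=> /eqP; rewrite oner_eq0.
  by case: (width_ineqs_attained hx0 hx1 hx2 hc) => h; apply: (pick _ _ _ _ _ h).
apply/eqP; rewrite eq_le; apply/andP; split.
- by apply: le_trans Wu; apply: ge_inf => //; exists w.
- by apply: lb_le_inf => //; exists (width_dir Q u).
Qed.

End CircumscribedTriangle.

Theorem lemma13 (R : realType) (p0 p1 p2 q0 q1 q2 : R * R) (x0 x1 x2 : R) :
  lattice_point p0 -> lattice_point p1 -> lattice_point p2 ->
  nondeg_triangle p0 p1 p2 ->
  (forall z, lattice_point z -> conv3 p0 p1 p2 z -> z = p0 \/ z = p1 \/ z = p2) ->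
  nondeg_triangle q0 q1 q2 ->
  p0 = comb x0 q1 q2 -> p1 = comb x1 q2 q0 -> p2 = comb x2 q0 q1 ->
  0 < x0 < 1 -> 0 < x1 < 1 -> 0 < x2 < 1 ->
  let Q := conv3 q0 q1 q2 in
  let cond_a := [/\ x0 + x1 > 1, x0 + x2 > 1 & x1 + x2 > 1] in
  let cond_b := [/\ x0 + x1 < 1, x0 + x2 < 1 & x1 + x2 < 1] in
  [/\ (mlf_triangle_type3 q0 q1 q2 <-> cond_a \/ cond_b),
      (cond_a -> lattice_width Q =
         Num.min x0 (Num.min x1 x2) /
           (x0 * x1 * x2 + (1 - x0) * (1 - x1) * (1 - x2))) &
      (cond_a -> lattice_width Q <= 1 + 2 / Num.sqrt 3 /\
         (lattice_width Q = 1 + 2 / Num.sqrt 3 <->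
            [/\ x0 = 1 / Num.sqrt 3, x1 = 1 / Num.sqrt 3 & x2 = 1 / Num.sqrt 3]))].
Proof.
move=> lp0 lp1 lp2 ndP emptyP ndQ hp0 hp1 hp2 hx0 hx1 hx2 Q cond_a cond_b.
have width := lattice_width_Q lp0 lp1 lp2 ndP emptyP hp0 hp1 hp2 hx0 hx1 hx2.
split => //.
- split; first exact: (type3_pair_sums lp0 lp1 lp2 ndP ndQ hp0 hp1 hp2 hx0 hx1 hx2).
  exact: (pair_sums_type3 lp0 lp1 lp2 ndP emptyP ndQ hp0 hp1 hp2 hx0 hx1 hx2).
- by move=> ha; rewrite width //; apply: min_div_wdenom_le.
Qed.
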